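(* Let $0<q<1$. The kernel $K(\mu,n)=1/(q^{\mu};q)_n$ is strictly sign regular of order $3$ on $(0,\infty)\times\mathbb{N}_0$ with sign pattern $(+,-,-)$, i.e. for all reals $0<\mu_1<\mu_2<\mu_3$ and integers $0\le n_1<n_2<n_3$: $K(\mu_1,n_1)>0$, $\det\big(K(\mu_i,n_j)\big)_{i,j=1}^2<0$, and $\det\big(K(\mu_i,n_j)\big)_{i,j=1}^3<0$ (for all choices of indices of the respective sizes).
   Context: $(a;q)_n=\prod_{j=0}^{n-1}(1-aq^j)$, with $(a;q)_0=1$. *)

From Stdlib Require Import Reals.
Open Scope R_scope.

Fixpoint qpoch (a q : R) (n : nat) : R :=
  match n with
  | O => 1
  | S m => qpoch a q m * (1 - a * q ^ m)
  end.

Definition Kq (q mu : R) (n : nat) : R := / qpoch (Rpower q mu) q n.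

Definition det2 (a11 a12 a21 a22 : R) : R := a11 * a22 - a12 * a21.

Definition det3 (a11 a12 a13 a21 a22 a23 a31 a32 a33 : R) : R :=
  a11 * (a22 * a33 - a23 * a32)
  - a12 * (a21 * a33 - a23 * a31)
  + a13 * (a21 * a32 - a22 * a31).

From Stdlib Require Import Reals Lra Lia.
Open Scope R_scope.

(* Put x = q^mu, so that K(mu, n) = 1 / (x;q)_n with x in (0,1) decreasing in
   mu.  For n1 < n2 < n3 split (x;q)_n2 = (x;q)_n1 A(x) and
   (x;q)_n3 = (x;q)_n2 B(x), where A and B are products of factors 1 - x c_j
   with 0 < c_j <= 1.  After removing the positive row factors 1/(x;q)_n1, the
   2x2 minor is negative because A is decreasing, and the 3x3 minor is negative
   because the points (1/A(x), 1/(A(x) B(x))) of the three rows lie strictly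
   above the tangent line of this curve at the middle one.  The only analytic
   input is that a product P(x) = prod_j (1 - x c_j) lies above its tangent
   lines: P(u) >= P(v) (1 - (u - v) L(v)) with L = -P'/P. *)

Fixpoint lin_prod (c : nat -> R) (x : R) (k : nat) : R :=
  match k with
  | O => 1
  | S k => lin_prod c x k * (1 - x * c k)
  end.

(* [lin_prod_logder c x k = - d/dx ln (lin_prod c x k)]. *)
Fixpoint lin_prod_logder (c : nat -> R) (x : R) (k : nat) : R :=
  match k with
  | O => 0
  | S k => lin_prod_logder c x k + c k / (1 - x * c k)
  end.

Lemma lin_prod_add (c : nat -> R) (x : R) (m k : nat) :
  lin_prod c x (m + k) = lin_prod c x m * lin_prod (fun j => c (m + j)%nat) x k.
Proof.
  induction k as [|k IH]; simpl.
  - rewrite Nat.add_0_r; ring.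
  - rewrite Nat.add_succ_r; simpl; rewrite IH; ring.
Qed.

Lemma qpoch_lin_prod (x q : R) (n : nat) : qpoch x q n = lin_prod (pow q) x n.
Proof. induction n as [|n IH]; simpl; [reflexivity | now rewrite IH]. Qed.

Lemma qpoch_add (x q : R) (m k : nat) :
  qpoch x q (m + k) = qpoch x q m * lin_prod (fun j => q ^ (m + j)) x k.
Proof. rewrite !qpoch_lin_prod; apply lin_prod_add. Qed.

Lemma mul_lt1 (c : nat -> R) (x : R) :
  (forall j, 0 < c j) -> (forall j, c j <= 1) -> x < 1 -> forall j, x * c j < 1.
Proof. intros c_pos c_le1 Hx j; specialize (c_pos j); specialize (c_le1 j); nra. Qed.

Section LinProd.

Variable c : nat -> R.
Hypothesis c_ge0 : forall j, 0 <= c j.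

Lemma lin_prod_pos (x : R) (k : nat) :
  (forall j, x * c j < 1) -> 0 < lin_prod c x k.
Proof.
  intros Hx; induction k as [|k IH]; simpl; [lra|].
  specialize (Hx k); apply Rmult_lt_0_compat; lra.
Qed.

Lemma lin_prod_logder_ge0 (x : R) (k : nat) :
  (forall j, x * c j < 1) -> 0 <= lin_prod_logder c x k.
Proof.
  intros Hx; induction k as [|k IH]; simpl; [lra|].
  specialize (Hx k); specialize (c_ge0 k).
  apply Rplus_le_le_0_compat; [exact IH|].
  unfold Rdiv; apply Rmult_le_pos; [lra|]; apply Rlt_le, Rinv_0_lt_compat; lra.
Qed.

Lemma lin_prod_logder_pos (x : R) (k : nat) :
  (forall j, 0 < c j) -> (forall j, x * c j < 1) -> (0 < k)%nat ->
  0 < lin_prod_logder c x k.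
Proof.
  intros c_pos Hx Hk; destruct k as [|k]; [lia|]; simpl.
  apply Rplus_le_lt_0_compat; [now apply lin_prod_logder_ge0|].
  specialize (Hx k); apply Rdiv_lt_0_compat; [apply c_pos | lra].
Qed.

Lemma lin_prod_logder_le (x y : R) (k : nat) :
  x <= y -> (forall j, y * c j < 1) -> lin_prod_logder c x k <= lin_prod_logder c y k.
Proof.
  intros Hxy Hy; induction k as [|k IH]; simpl; [lra|].
  specialize (Hy k); specialize (c_ge0 k).
  apply Rplus_le_compat; [exact IH|].
  unfold Rdiv; apply Rmult_le_compat_l; [lra|]; apply Rinv_le_contravar; nra.
Qed.

Lemma lin_prod_logder_lt (x y : R) (k : nat) :
  (forall j, 0 < c j) -> x < y -> (forall j, y * c j < 1) -> (0 < k)%nat ->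
  lin_prod_logder c x k < lin_prod_logder c y k.
Proof.
  intros c_pos Hxy Hy Hk; destruct k as [|k]; [lia|]; simpl.
  apply Rplus_le_lt_compat; [apply lin_prod_logder_le; auto; lra|].
  specialize (Hy k); specialize (c_pos k).
  assert (x * c k < y * c k) by (apply Rmult_lt_compat_r; lra).
  unfold Rdiv; apply Rmult_lt_compat_l; [lra|].
  apply Rinv_lt_contravar; [apply Rmult_lt_0_compat|]; lra.
Qed.

(* Passing from k to k + 1 the inequality loses exactly
   [lin_prod c v k * (u - v)^2 * c k * lin_prod_logder c v k >= 0], whatever the
   sign of [u - v]. *)
Lemma lin_prod_above_tangent (u v : R) (k : nat) :
  (forall j, u * c j <= 1) -> (forall j, v * c j < 1) ->
  lin_prod c v k * (1 - (u - v) * lin_prod_logder c v k) <= lin_prod c u k.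
Proof.
  intros Hu Hv; induction k as [|k IH]; simpl; [lra|].
  pose proof (lin_prod_pos v k Hv) as Pv_pos.
  pose proof (lin_prod_logder_ge0 v k Hv) as L_ge0.
  specialize (Hu k); specialize (Hv k); specialize (c_ge0 k).
  set (Pu := lin_prod c u k) in *; set (Pv := lin_prod c v k) in *.
  set (L := lin_prod_logder c v k) in *; set (ck := c k) in *.
  assert (Estep : (1 - v * ck) * (1 - (u - v) * (L + ck / (1 - v * ck))) =
                  (1 - (u - v) * L) * (1 - u * ck) - (u - v) ^ 2 * ck * L)
    by (field; lra).
  rewrite Rmult_assoc, Estep.
  assert (Pv * (1 - (u - v) * L) * (1 - u * ck) <= Pu * (1 - u * ck))
    by (apply Rmult_le_compat_r; lra).
  assert (0 <= Pv * ((u - v) ^ 2 * ck * L))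
    by (apply Rmult_le_pos; [lra|]; apply Rmult_le_pos; [|lra];
        apply Rmult_le_pos; [apply pow2_ge_0 | lra]).
  lra.
Qed.

Lemma lin_prod_decreasing (x y : R) (k : nat) :
  (forall j, 0 < c j) -> x < y -> (forall j, y * c j < 1) -> (0 < k)%nat ->
  lin_prod c y k < lin_prod c x k.
Proof.
  intros c_pos Hxy Hy Hk.
  assert (Hx : forall j, x * c j <= 1)
    by (intros j; specialize (Hy j); specialize (c_pos j); nra).
  pose proof (lin_prod_above_tangent x y k Hx Hy).
  pose proof (lin_prod_pos y k Hy).
  pose proof (lin_prod_logder_pos y k c_pos Hy Hk).
  assert (0 < lin_prod c y k * ((y - x) * lin_prod_logder c y k))
    by (apply Rmult_lt_0_compat; [|apply Rmult_lt_0_compat]; lra).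
  lra.
Qed.

End LinProd.

(* Used with [A = A(v)], [A' = A(x)], [e = v - x] and [a], [b], [b'] the
   logarithmic derivatives -A'/A at v, -B'/B at v and at x: the first two
   inequalities are then tangent inequalities, and [(a + b) / (a B)] is the slope
   dh/dg at v of the curve g = 1/A, h = 1/(A B). *)
Lemma above_tangent_line (A A' B B' a b b' e : R) :
  0 < A -> 0 < A' -> 0 < B -> 0 < B' -> 0 < a -> 0 < b ->
  A * (1 + e * a) <= A' -> B' * (1 - e * b') <= B -> e * (b' - b) < 0 ->
  (a + b) / (a * B) * (/ A' - / A) < / (A' * B') - / (A * B).
Proof.
  intros HA HA' HB HB' Ha Hb HAA' HBB' Hb'.
  assert (Hkey : a * A * (B' - B) < b * B' * (A' - A)).
  { assert (a * A * (B' - B) <= a * A * (B' * e * b'))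
      by (apply Rmult_le_compat_l; [apply Rmult_le_pos|]; lra).
    assert (0 < a * A * B') by (repeat apply Rmult_lt_0_compat; lra).
    assert (b * B' * (A * e * a) <= b * B' * (A' - A))
      by (apply Rmult_le_compat_l; [apply Rmult_le_pos|]; lra).
    nra. }
  apply Rlt_0_minus.
  replace (/ (A' * B') - / (A * B) - (a + b) / (a * B) * (/ A' - / A))
    with ((b * B' * (A' - A) - a * A * (B' - B)) / (a * A * A' * B * B'))
    by (field; repeat split; lra).
  apply Rdiv_lt_0_compat; [lra|]; repeat apply Rmult_lt_0_compat; lra.
Qed.

Lemma det3_neg_of_above_line (g1 g2 g3 h1 h2 h3 r : R) :
  g3 < g2 -> g2 < g1 -> r * (g1 - g2) < h1 - h2 -> r * (g3 - g2) < h3 - h2 ->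
  det3 1 g1 h1 1 g2 h2 1 g3 h3 < 0.
Proof.
  intros H32 H21 H1 H3.
  replace (det3 1 g1 h1 1 g2 h2 1 g3 h3)
    with ((g3 - g2) * (h1 - h2) - (g1 - g2) * (h3 - h2)) by (unfold det3; ring).
  assert ((g3 - g2) * (h1 - h2) < (g3 - g2) * (r * (g1 - g2)))
    by (apply Rmult_lt_gt_compat_neg_l; lra).
  assert ((g1 - g2) * (r * (g3 - g2)) < (g1 - g2) * (h3 - h2))
    by (apply Rmult_lt_compat_l; lra).
  nra.
Qed.

Lemma det2_factor_rows (p1 p2 A1 A2 : R) :
  det2 (/ p1) (/ (p1 * A1)) (/ p2) (/ (p2 * A2)) = / p1 * / p2 * (/ A2 - / A1).
Proof. unfold det2; rewrite !Rinv_mult; ring. Qed.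

Lemma det3_factor_rows (p1 p2 p3 A1 A2 A3 B1 B2 B3 : R) :
  det3 (/ p1) (/ (p1 * A1)) (/ (p1 * A1 * B1))
       (/ p2) (/ (p2 * A2)) (/ (p2 * A2 * B2))
       (/ p3) (/ (p3 * A3)) (/ (p3 * A3 * B3)) =
  / p1 * / p2 * / p3 *
  det3 1 (/ A1) (/ (A1 * B1)) 1 (/ A2) (/ (A2 * B2)) 1 (/ A3) (/ (A3 * B3)).
Proof. unfold det3; rewrite !Rinv_mult; ring. Qed.

Section KernelCurve.

Variables cA cB : nat -> R.
Hypothesis cA_pos : forall j, 0 < cA j.
Hypothesis cA_le1 : forall j, cA j <= 1.
Hypothesis cB_pos : forall j, 0 < cB j.
Hypothesis cB_le1 : forall j, cB j <= 1.
Variables a b : nat.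
Hypothesis a_pos : (0 < a)%nat.
Hypothesis b_pos : (0 < b)%nat.

Let A x := lin_prod cA x a.
Let B x := lin_prod cB x b.
Let LA x := lin_prod_logder cA x a.
Let LB x := lin_prod_logder cB x b.

Let cA_ge0 j : 0 <= cA j := Rlt_le _ _ (cA_pos j).
Let cB_ge0 j : 0 <= cB j := Rlt_le _ _ (cB_pos j).

Lemma kernel_curve_above_tangent (x v : R) :
  x < 1 -> v < 1 -> x <> v ->
  (LA v + LB v) / (LA v * B v) * (/ A x - / A v) < / (A x * B x) - / (A v * B v).
Proof.
  intros Hx Hv Hxv.
  pose proof (mul_lt1 cA x cA_pos cA_le1 Hx) as HAx.
  pose proof (mul_lt1 cA v cA_pos cA_le1 Hv) as HAv.
  pose proof (mul_lt1 cB x cB_pos cB_le1 Hx) as HBx.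
  pose proof (mul_lt1 cB v cB_pos cB_le1 Hv) as HBv.
  apply (above_tangent_line _ _ _ _ _ _ (LB x) (v - x)).
  - now apply lin_prod_pos.
  - now apply lin_prod_pos.
  - now apply lin_prod_pos.
  - now apply lin_prod_pos.
  - now apply lin_prod_logder_pos.
  - now apply lin_prod_logder_pos.
  - replace (1 + (v - x) * LA v) with (1 - (x - v) * LA v) by ring.
    apply lin_prod_above_tangent; auto; intros j; apply Rlt_le, HAx.
  - apply lin_prod_above_tangent; auto; intros j; apply Rlt_le, HBv.
  - destruct (Rlt_or_le x v) as [Hlt | Hle].
    + pose proof (lin_prod_logder_lt cB cB_ge0 x v b cB_pos Hlt HBv b_pos).
      unfold LB; nra.
    + assert (Hlt : v < x) by lra.
      pose proof (lin_prod_logder_lt cB cB_ge0 v x b cB_pos Hlt HBx b_pos).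
      unfold LB; nra.
Qed.

Lemma kernel_det3_neg (x1 x2 x3 : R) :
  x3 < x2 -> x2 < x1 -> x1 < 1 ->
  det3 1 (/ A x1) (/ (A x1 * B x1))
       1 (/ A x2) (/ (A x2 * B x2))
       1 (/ A x3) (/ (A x3 * B x3)) < 0.
Proof.
  intros H32 H21 H1.
  assert (Hinv : forall x y, x < y -> y < 1 -> / A x < / A y).
  { intros x y Hxy Hy.
    pose proof (mul_lt1 cA y cA_pos cA_le1 Hy) as HAy.
    apply Rinv_lt_contravar; [apply Rmult_lt_0_compat; apply lin_prod_pos; auto|].
    - apply (mul_lt1 cA x cA_pos cA_le1); lra.
    - now apply lin_prod_decreasing. }
  apply (det3_neg_of_above_line _ _ _ _ _ _ ((LA x2 + LB x2) / (LA x2 * B x2))).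
  - apply Hinv; lra.
  - apply Hinv; lra.
  - apply kernel_curve_above_tangent; lra.
  - apply kernel_curve_above_tangent; lra.
Qed.

End KernelCurve.

Lemma pow_in_unit (q : R) (n : nat) : 0 < q < 1 -> 0 < q ^ n <= 1.
Proof.
  intros Hq; split; [now apply pow_lt|].
  rewrite <- (pow1 n); apply pow_incr; lra.
Qed.

Lemma qpoch_pos (x q : R) (n : nat) : 0 < q < 1 -> x < 1 -> 0 < qpoch x q n.
Proof.
  intros Hq Hx; rewrite qpoch_lin_prod.
  apply lin_prod_pos, mul_lt1; auto; intros j; apply pow_in_unit, Hq.
Qed.

Lemma qpoch_inv_det2_neg (q x1 x2 : R) (n1 n2 : nat) :
  0 < q < 1 -> x2 < x1 -> x1 < 1 -> (n1 < n2)%nat ->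
  det2 (/ qpoch x1 q n1) (/ qpoch x1 q n2) (/ qpoch x2 q n1) (/ qpoch x2 q n2) < 0.
Proof.
  intros Hq H21 H1 Hn.
  assert (Ha : exists a, (0 < a)%nat /\ n2 = (n1 + a)%nat)
    by (exists (n2 - n1)%nat; lia).
  destruct Ha as (a & Ha & ->).
  rewrite !qpoch_add, det2_factor_rows.
  set (c := fun j => q ^ (n1 + j)).
  assert (c_pos : forall j, 0 < c j) by (intros j; apply pow_in_unit, Hq).
  assert (c_le1 : forall j, c j <= 1) by (intros j; apply pow_in_unit, Hq).
  assert (Hc1 := mul_lt1 c x1 c_pos c_le1 H1).
  assert (Hc2 : forall j, x2 * c j < 1) by (apply mul_lt1; auto; lra).
  assert (0 < / qpoch x1 q n1 * / qpoch x2 q n1)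
    by (apply Rmult_lt_0_compat; apply Rinv_0_lt_compat, qpoch_pos; auto; lra).
  assert (/ lin_prod c x2 a < / lin_prod c x1 a).
  { apply Rinv_lt_contravar.
    - apply Rmult_lt_0_compat; now apply lin_prod_pos.
    - apply lin_prod_decreasing; auto; intros j; apply Rlt_le, c_pos. }
  nra.
Qed.

Lemma qpoch_inv_det3_neg (q x1 x2 x3 : R) (n1 n2 n3 : nat) :
  0 < q < 1 -> x3 < x2 -> x2 < x1 -> x1 < 1 -> (n1 < n2)%nat -> (n2 < n3)%nat ->
  det3 (/ qpoch x1 q n1) (/ qpoch x1 q n2) (/ qpoch x1 q n3)
       (/ qpoch x2 q n1) (/ qpoch x2 q n2) (/ qpoch x2 q n3)
       (/ qpoch x3 q n1) (/ qpoch x3 q n2) (/ qpoch x3 q n3) < 0.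
Proof.
  intros Hq H32 H21 H1 Hn12 Hn23.
  assert (Hab : exists a b, (0 < a)%nat /\ (0 < b)%nat /\
                           n2 = (n1 + a)%nat /\ n3 = (n1 + a + b)%nat)
    by (exists (n2 - n1)%nat, (n3 - n2)%nat; lia).
  destruct Hab as (a & b & Ha & Hb & -> & ->).
  rewrite !qpoch_add, det3_factor_rows.
  assert (0 < / qpoch x1 q n1 * / qpoch x2 q n1 * / qpoch x3 q n1)
    by (repeat apply Rmult_lt_0_compat; apply Rinv_0_lt_compat, qpoch_pos; auto; lra).
  assert (Hpow : forall m j, 0 < q ^ (m + j) <= 1) by (intros; apply pow_in_unit, Hq).
  pose proof (kernel_det3_neg (fun j => q ^ (n1 + j)) (fun j => q ^ (n1 + a + j))
                (fun j => proj1 (Hpow _ j)) (fun j => proj2 (Hpow _ j))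
                (fun j => proj1 (Hpow _ j)) (fun j => proj2 (Hpow _ j))
                a b Ha Hb x1 x2 x3 H32 H21 H1).
  nra.
Qed.

Lemma Rpower_decreasing (q mu1 mu2 : R) :
  0 < q < 1 -> mu1 < mu2 -> Rpower q mu2 < Rpower q mu1.
Proof.
  intros Hq Hmu; unfold Rpower; apply exp_increasing.
  assert (ln q < 0) by (rewrite <- ln_1; apply ln_increasing; lra).
  nra.
Qed.

Theorem lemma4 (q : R) (hq0 : 0 < q) (hq1 : q < 1) :
  (forall (mu1 : R) (n1 : nat), 0 < mu1 -> 0 < Kq q mu1 n1) /\
  (forall (mu1 mu2 : R) (n1 n2 : nat),
      0 < mu1 -> mu1 < mu2 -> (n1 < n2)%nat ->
      det2 (Kq q mu1 n1) (Kq q mu1 n2)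
           (Kq q mu2 n1) (Kq q mu2 n2) < 0) /\
  (forall (mu1 mu2 mu3 : R) (n1 n2 n3 : nat),
      0 < mu1 -> mu1 < mu2 -> mu2 < mu3 -> (n1 < n2)%nat -> (n2 < n3)%nat ->
      det3 (Kq q mu1 n1) (Kq q mu1 n2) (Kq q mu1 n3)
           (Kq q mu2 n1) (Kq q mu2 n2) (Kq q mu2 n3)
           (Kq q mu3 n1) (Kq q mu3 n2) (Kq q mu3 n3) < 0).
Proof.
  assert (Hq : 0 < q < 1) by lra.
  assert (Hlt1 : forall mu, 0 < mu -> Rpower q mu < 1).
  { intros mu Hmu; rewrite <- (Rpower_O q hq0); now apply Rpower_decreasing. }
  unfold Kq; split; [|split].
  - intros mu n Hmu; apply Rinv_0_lt_compat, qpoch_pos; auto.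
  - intros mu1 mu2 n1 n2 Hmu1 H12 Hn.
    apply qpoch_inv_det2_neg; auto; now apply Rpower_decreasing.
  - intros mu1 mu2 mu3 n1 n2 n3 Hmu1 H12 H23 Hn12 Hn23.
    apply qpoch_inv_det3_neg; auto; now apply Rpower_decreasing.
Qed.
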